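(* Let $\mathcal{H}$ be a two-dimensional Hilbert space, let $\varepsilon\in[0,1]$, and let $\mathcal{D}_\varepsilon(\rho)=(1-\varepsilon)\rho+\varepsilon\frac{1}{2}\mathrm{tr}\rho$ be the depolarizing map on $\mathcal{L}(\mathcal{H})$. For any trace-preserving completely positive (TPCP) map $\mathcal{E}$ on $\mathcal{L}(\mathcal{H})$ there exists a TPCP map $\tilde{\mathcal{E}}$ on $\mathcal{L}(\mathcal{H})$ such that $\mathcal{D}_\varepsilon\circ\mathcal{E}=\tilde{\mathcal{E}}\circ\mathcal{D}_\varepsilon$.
   Context: $\mathcal{L}(\mathcal{H})$ denotes the set of linear operators on $\mathcal{H}$. *)

From HB Require Import structures.
From mathcomp Require Import all_boot all_order all_algebra.
From mathcomp Require Import complex.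
From mathcomp Require Import reals.
Set Implicit Arguments. Unset Strict Implicit. Unset Printing Implicit Defensive.
Import Order.TTheory GRing.Theory Num.Theory.
Local Open Scope ring_scope.

Section Defs.
Variable C : numClosedFieldType.

Definition adj {m n} (A : 'M[C]_(m, n)) : 'M[C]_(n, m) := map_mx Num.conj A^T.

Definition is_linear_map (E : 'M[C]_2 -> 'M[C]_2) : Prop :=
  forall (a : C) (X Y : 'M[C]_2), E (a *: X + Y) = a *: E X + E Y.

Definition trace_preserving (E : 'M[C]_2 -> 'M[C]_2) : Prop :=
  forall X : 'M[C]_2, \tr (E X) = \tr X.

(* An operator on C^n (x) C^2, written as an n x n array of 2x2 blocks
   X i j, is positive semidefinite iff <v, X v> >= 0 for every vector
   v = (v_i)_i in C^n (x) C^2. *)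
Definition block_psd (n : nat) (X : 'I_n -> 'I_n -> 'M[C]_2) : Prop :=
  forall v : 'I_n -> 'cV[C]_2,
    0 <= \sum_(i < n) \sum_(j < n) (adj (v i) *m X i j *m v j) 0 0.

(* complete positivity: id_n (x) E is positive for every n *)
Definition completely_positive (E : 'M[C]_2 -> 'M[C]_2) : Prop :=
  forall (n : nat) (X : 'I_n -> 'I_n -> 'M[C]_2),
    block_psd X -> block_psd (fun i j => E (X i j)).

Definition TPCP (E : 'M[C]_2 -> 'M[C]_2) : Prop :=
  [/\ is_linear_map E, trace_preserving E & completely_positive E].

Definition depolarizing (eps : C) (X : 'M[C]_2) : 'M[C]_2 :=
  (1 - eps) *: X + (eps * \tr X / 2) *: 1%:M.
End Defs.

From HB Require Import structures.
From mathcomp Require Import all_boot all_order all_algebra.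
From mathcomp Require Import complex.
From mathcomp Require Import reals.
From mathcomp Require Import ring.

(* The intertwining channel is (1 - ε/2) E + (ε/2) Θ ∘ E ∘ Θ, where
   Θ Y = σ_y Ȳ σ_y is the spin flip.  On 2x2 matrices Θ Y = conj(tr Y) I - Y†.
   A completely positive E maps every u u† to a Hermitian matrix, and these
   span all matrices by polarization, so E commutes with the adjoint; if E is
   also trace preserving this gives Θ (E (Θ X)) = E X + tr X (I - E I), hence
   the intertwining channel is X ↦ E X + (ε/2) tr X (I - E I), which commutes
   with D_ε as required.  Θ is entrywise conjugation followed by a congruence,
   both completely positive, so for 0 ≤ ε ≤ 2 the intertwining channel is a
   nonnegative combination of completely positive maps. *)

Set Implicit Arguments. Unset Strict Implicit. Unset Printing Implicit Defensive.
Import Order.TTheory GRing.Theory Num.Theory.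
Local Open Scope ring_scope.

Section Adjoint.
Variable C : numClosedFieldType.

Lemma adjE m n (A : 'M[C]_(m, n)) i j : adj A i j = (A j i)^*.
Proof. by rewrite !mxE. Qed.

Lemma adjK m n (A : 'M[C]_(m, n)) : adj (adj A) = A.
Proof. by apply/matrixP => i j; rewrite !adjE conjCK. Qed.

Lemma adjM m n p (A : 'M[C]_(m, n)) (B : 'M[C]_(n, p)) :
  adj (A *m B) = adj B *m adj A.
Proof. by rewrite /adj trmx_mul map_mxM. Qed.

Lemma adjD m n (A B : 'M[C]_(m, n)) : adj (A + B) = adj A + adj B.
Proof. by apply/matrixP => i j; rewrite !mxE rmorphD. Qed.

Lemma adjZ m n a (A : 'M[C]_(m, n)) : adj (a *: A) = a^* *: adj A.
Proof. by apply/matrixP => i j; rewrite !mxE rmorphM. Qed.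

Lemma adjN m n (A : 'M[C]_(m, n)) : adj (- A) = - adj A.
Proof. by apply/matrixP => i j; rewrite !mxE rmorphN. Qed.

Lemma adj_scalar n a : adj (a%:M : 'M[C]_n) = a^*%:M.
Proof. by apply/matrixP => i j; rewrite !mxE eq_sym; case: eqP; rewrite ?rmorph0. Qed.

Lemma adj_delta m n i j : adj (delta_mx i j : 'M[C]_(m, n)) = delta_mx j i.
Proof. by rewrite /adj trmx_delta map_delta_mx. Qed.

Lemma adj_sum I (r : seq I) (P : pred I) m n (A : I -> 'M[C]_(m, n)) :
  adj (\sum_(i <- r | P i) A i) = \sum_(i <- r | P i) adj (A i).
Proof.
apply: big_morph; first exact: adjD.
by apply/matrixP => i j; rewrite !mxE rmorph0.
Qed.

Lemma map_mx_conjK m n (A : 'M[C]_(m, n)) : map_mx Num.conj (map_mx Num.conj A) = A.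
Proof. by apply/matrixP => i j; rewrite !mxE conjCK. Qed.

Lemma adj_map_conj m n (A : 'M[C]_(m, n)) :
  adj (map_mx Num.conj A) = map_mx Num.conj (adj A).
Proof. by apply/matrixP => i j; rewrite !mxE. Qed.

Lemma mxtrace_adj n (A : 'M[C]_n) : \tr (adj A) = (\tr A)^*.
Proof. by rewrite /mxtrace rmorph_sum; apply: eq_bigr => i _; rewrite adjE. Qed.

Lemma mulmx_adj_expand m n (u w : 'M[C]_(m, n)) (A : 'M[C]_n) c :
  (u + c *: w) *m A *m adj (u + c *: w) =
  u *m A *m adj u + c^* *: (u *m A *m adj w) + c *: (w *m A *m adj u)
  + (c * c^*) *: (w *m A *m adj w).
Proof.
rewrite adjD adjZ !(mulmxDl, mulmxDr) -!(scalemxAl, scalemxAr).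
by rewrite scalerA addrACA addrA.
Qed.

Lemma polarization (V : lmodType C) (x y : V) :
  (forall c : C, c *: x + c^* *: y = 0) -> x = 0.
Proof.
move=> xy0; have := xy0 1; have := xy0 'i.
rewrite conjCi conjC1 !scale1r scaleNr => hi h1.
have : 2%:R *: x = (x + y) - 'i *: ('i *: x - 'i *: y).
  rewrite scalerBr !scalerA -expr2 sqrCi !scaleN1r opprK opprD opprK.
  by rewrite addrACA subrr addr0 scaler_nat mulr2n.
by rewrite h1 hi scaler0 subr0 => /eqP; rewrite scaler_eq0 pnatr_eq0 => /eqP.
Qed.

Lemma adj_form_eq0 n (B : 'M[C]_n) :
  (forall v : 'cV_n, adj v *m B *m v = 0) -> B = 0.
Proof.
move=> B0; apply/matrixP => i j; rewrite mxE.
pose u : 'rV[C]_n := delta_mx 0 j; pose w : 'rV[C]_n := delta_mx 0 i.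
have wBu0 : w *m B *m adj u = 0.
  apply: (polarization (y := u *m B *m adj w)) => c.
  have := B0 (adj (u + c *: w)); rewrite adjK mulmx_adj_expand.
  have := B0 (adj u); have := B0 (adj w); rewrite !adjK => -> ->.
  by rewrite scaler0 addr0 add0r addrC.
by move: wBu0 => /matrixP/(_ 0 0); rewrite adj_delta -rowE -colE !mxE.
Qed.

Lemma psd_hermitian n (A : 'M[C]_n) :
  (forall v : 'cV_n, 0 <= (adj v *m A *m v) 0 0) -> adj A = A.
Proof.
move=> psdA; apply/eqP; rewrite -subr_eq0; apply/eqP/adj_form_eq0 => v.
rewrite mulmxBr mulmxBl; apply/eqP; rewrite subr_eq0; apply/eqP.
rewrite [LHS]mx11_scalar [RHS]mx11_scalar; congr _%:M.
have -> : adj v *m adj A *m v = adj (adj v *m A *m v) by rewrite !adjM adjK mulmxA.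
by rewrite adjE conj_Creal // ger0_real.
Qed.
End Adjoint.

Section CompletePositivity.
Variable C : numClosedFieldType.
Implicit Types (F G : 'M[C]_2 -> 'M[C]_2).

Lemma completely_positive_comp F G :
  completely_positive F -> completely_positive G -> completely_positive (F \o G).
Proof. by move=> cpF cpG n X /cpG /cpF. Qed.

Lemma completely_positive_map_conj : completely_positive (map_mx (@Num.conj C)).
Proof.
move=> n X psdX v; pose cv i := map_mx Num.conj (v i).
rewrite [leRHS](_ : _ = (\sum_i \sum_j (adj (cv i) *m X i j *m cv j) 0 0)^*).
  by rewrite conj_Creal ?ger0_real ?psdX.
rewrite rmorph_sum; apply: eq_bigr => i _; rewrite rmorph_sum; apply: eq_bigr => j _.
transitivity ((map_mx Num.conj (adj (cv i) *m X i j *m cv j)) 0 0); last by rewrite mxE.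
by rewrite !map_mxM adj_map_conj !map_mx_conjK.
Qed.

Lemma completely_positive_congruence (U : 'M[C]_2) :
  completely_positive (fun A => adj U *m A *m U).
Proof.
move=> n X psdX v.
rewrite [leRHS](_ : _ = \sum_i \sum_j (adj (U *m v i) *m X i j *m (U *m v j)) 0 0).
  exact: psdX.
by apply: eq_bigr => i _; apply: eq_bigr => j _; rewrite adjM !mulmxA.
Qed.

Lemma completely_positive_nneg_comb (a b : C) F G :
  0 <= a -> 0 <= b -> completely_positive F -> completely_positive G ->
  completely_positive (fun A => a *: F A + b *: G A).
Proof.
move=> a_ge0 b_ge0 cpF cpG n X psdX v.
rewrite [leRHS](_ : _ =
    a * (\sum_i \sum_j (adj (v i) *m F (X i j) *m v j) 0 0) +
    b * (\sum_i \sum_j (adj (v i) *m G (X i j) *m v j) 0 0)).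
  by rewrite addr_ge0 ?mulr_ge0 ?cpF ?cpG.
rewrite !mulr_sumr -big_split; apply: eq_bigr => i _.
rewrite !mulr_sumr -big_split; apply: eq_bigr => j _ /=.
by rewrite mulmxDr mulmxDl -!scalemxAr -!scalemxAl !mxE.
Qed.

Lemma block_psd_rank1 (u : 'cV[C]_2) : block_psd (fun _ _ : 'I_1 => u *m adj u).
Proof.
move=> v; rewrite !big_ord1 mulmxA -mulmxA.
have -> : adj u *m v ord0 = adj (adj (v ord0) *m u) by rewrite adjM adjK.
by rewrite mxE big_ord1 adjE mul_conjC_ge0.
Qed.

Lemma completely_positive_adj_rank1 F (u : 'cV[C]_2) : completely_positive F ->
  adj (F (u *m adj u)) = F (u *m adj u).
Proof.
move=> cpF; apply: psd_hermitian => v.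
by have := cpF 1%N _ (block_psd_rank1 u) (fun=> v); rewrite !big_ord1.
Qed.

End CompletePositivity.

Section LinearMap.
Variables (C : numClosedFieldType) (F : 'M[C]_2 -> 'M[C]_2).
Hypothesis linF : is_linear_map F.

Lemma linear_map0 : F 0 = 0.
Proof.
have := linF 1 0 0; rewrite !scale1r addr0 => F0.
by apply: (addrI (F 0)); rewrite addr0 -F0.
Qed.

Lemma linear_mapD X Y : F (X + Y) = F X + F Y.
Proof. by have := linF 1 X Y; rewrite !scale1r. Qed.

Lemma linear_mapZ a X : F (a *: X) = a *: F X.
Proof. by have := linF a X 0; rewrite !addr0 linear_map0 addr0. Qed.

Lemma linear_mapN X : F (- X) = - F X.
Proof. by rewrite -scaleN1r linear_mapZ scaleN1r. Qed.

Lemma linear_map_sum I (r : seq I) (P : pred I) (A : I -> 'M[C]_2) :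
  F (\sum_(i <- r | P i) A i) = \sum_(i <- r | P i) F (A i).
Proof. exact: (big_morph F linear_mapD linear_map0). Qed.

Hypothesis hermF : forall u : 'cV[C]_2, adj (F (u *m adj u)) = F (u *m adj u).

Lemma linear_map_adj_outer (u w : 'cV[C]_2) :
  adj (F (u *m adj w)) = F (w *m adj u).
Proof.
apply/eqP; rewrite -subr_eq0; apply/eqP.
apply: (polarization (y := adj (F (w *m adj u)) - F (u *m adj w))) => c.
have := hermF (u + c *: w); have := mulmx_adj_expand u w 1%:M c; rewrite !mulmx1 => ->.
rewrite !(linear_mapD, linear_mapZ) !(adjD, adjZ) !hermF.
have -> : (c * c^*)^* = c * c^* by rewrite rmorphM /= conjCK mulrC.
rewrite conjCK => /(addIr _).
rewrite -!addrA => /(addrI _) expand.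
rewrite !scalerBr addrACA -opprD expand.
by rewrite [c *: F (w *m adj u) + _]addrC subrr.
Qed.

Lemma linear_map_adj X : F (adj X) = adj (F X).
Proof.
rewrite [in LHS](matrix_sum_delta X) [in RHS](matrix_sum_delta X).
have outer (k l : 'I_2) : delta_mx k l = delta_mx k 0 *m adj (delta_mx l 0 : 'cV[C]_2).
  by rewrite adj_delta mul_delta_mx.
rewrite adj_sum linear_map_sum [in RHS]linear_map_sum adj_sum.
apply: eq_bigr => i _; rewrite adj_sum linear_map_sum [in RHS]linear_map_sum adj_sum.
apply: eq_bigr => j _; rewrite adjZ !linear_mapZ adjZ adj_delta.
by rewrite (outer j i) (outer i j) linear_map_adj_outer.
Qed.

End LinearMap.

Section SpinFlip.
Variable C : numClosedFieldType.

(* jmx = -i σ_y, and spin_flip is Wootters' spin flip Y ↦ σ_y Ȳ σ_y. *)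
Definition jmx : 'M[C]_2 := delta_mx 1 0 - delta_mx 0 1.

Definition spin_flip (X : 'M[C]_2) : 'M[C]_2 := adj jmx *m map_mx Num.conj X *m jmx.

Lemma spin_flipE X : spin_flip X = (\tr X)^* *: 1%:M - adj X.
Proof.
apply/matrixP => i j; rewrite /spin_flip /jmx /mxtrace.
rewrite !(mxE, big_ord_recl, big_ord0) /=.
have o0 (p : (0 < 2)%N) : Ordinal p = 0 by apply: val_inj.
have o1 (p : (1 < 2)%N) : Ordinal p = 1 by apply: val_inj.
have l1 : lift ord0 ord0 = 1 :> 'I_2 by apply: val_inj.
case: i => [[|[|//]]] ?; case: j => [[|[|//]]] ?; rewrite ?o0 ?o1 l1 /=.
all: rewrite !(rmorphB, rmorphD, rmorph0, rmorph1); ring.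
Qed.

Lemma completely_positive_spin_flip : completely_positive spin_flip.
Proof.
exact: completely_positive_comp (completely_positive_congruence jmx)
  (@completely_positive_map_conj C).
Qed.

Section Channel.
Variable E : 'M[C]_2 -> 'M[C]_2.
Hypotheses (linE : is_linear_map E) (tpE : trace_preserving E)
  (cpE : completely_positive E).

Lemma spin_flip_conjugate X :
  spin_flip (E (spin_flip X)) = E X + \tr X *: (1%:M - E 1%:M).
Proof.
have hermE := linear_map_adj linE (fun u => completely_positive_adj_rank1 u cpE).
have adjE1 : adj (E 1%:M) = E 1%:M by rewrite -hermE adj_scalar conjC1.
rewrite !spin_flipE (linear_mapD linE) (linear_mapN linE) (linear_mapZ linE).
rewrite mxtraceD raddfN mxtraceZ /= !tpE mxtrace_adj mxtrace1.
rewrite adjD adjN adjZ hermE adjK adjE1 conjCK.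
have -> : ((\tr X)^* * 2%:R - (\tr X)^*)^* = \tr X.
  by rewrite rmorphB rmorphM rmorph_nat /= conjCK mulr_natr mulr2n addrK.
by apply/matrixP => i j; rewrite !mxE; ring.
Qed.

Variable eps : C.

Definition intertwining_channel X :=
  (1 - eps / 2) *: E X + (eps / 2) *: spin_flip (E (spin_flip X)).

Lemma intertwining_channelE X :
  intertwining_channel X = E X + (eps / 2 * \tr X) *: (1%:M - E 1%:M).
Proof.
rewrite /intertwining_channel spin_flip_conjugate.
by apply/matrixP => i j; rewrite !mxE; ring.
Qed.

Lemma intertwining_channel_TPCP : 0 <= eps -> eps <= 2 -> TPCP intertwining_channel.
Proof.
move=> eps_ge0 eps_le2; split.
- move=> a X Y; rewrite !intertwining_channelE (linear_mapD linE) (linear_mapZ linE).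
  by rewrite mxtraceD mxtraceZ; apply/matrixP => i j; rewrite !mxE; ring.
- move=> X; rewrite intertwining_channelE mxtraceD mxtraceZ !mxtraceD raddfN /=.
  by rewrite tpE [\tr (E _)]tpE subrr mulr0 addr0.
- have cp_flipped : completely_positive (spin_flip \o (E \o spin_flip)).
    exact: completely_positive_comp completely_positive_spin_flip
      (completely_positive_comp cpE completely_positive_spin_flip).
  apply: completely_positive_nneg_comb cpE cp_flipped.
    by rewrite subr_ge0 ler_pdivrMr // mul1r.
  by rewrite divr_ge0.
Qed.

Lemma depolarizing_intertwining X :
  depolarizing eps (E X) = intertwining_channel (depolarizing eps X).
Proof.
rewrite /depolarizing intertwining_channelE (linear_mapD linE) !(linear_mapZ linE) tpE.
rewrite mxtraceD !mxtraceZ mxtrace1.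
by apply/matrixP => i j; rewrite !mxE; field.
Qed.

End Channel.
End SpinFlip.

Local Open Scope complex_scope.

Theorem lemma2 (R : realType) (eps : R) (heps0 : 0 <= eps) (heps1 : eps <= 1)
  (E : 'M[R[i]]_2 -> 'M[R[i]]_2) :
  TPCP E ->
  exists Et : 'M[R[i]]_2 -> 'M[R[i]]_2,
    TPCP Et /\
    forall X : 'M[R[i]]_2,
      depolarizing eps%:C (E X) = Et (depolarizing eps%:C X).
Proof.
move=> [linE tpE cpE]; exists (intertwining_channel E eps%:C); split.
  apply: (intertwining_channel_TPCP linE tpE cpE); first by rewrite ler0c.
  by rewrite (le_trans (_ : eps%:C <= 1%:C)) ?lecR ?ler1n.
exact: depolarizing_intertwining.
Qed.
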